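(* For every bipartite quantum channel $\mathcal N\in\mathrm{Ch}(A'B',AB)$, \[ S^{\not\to}_\infty[A|B]_{\mathcal N}=S^\downarrow_\infty(A|R_AR_BB)_{\Phi^{\mathcal N}}. \]
   Context: All systems are finite-dimensional; $\log$ base 2; $\mathrm{St}(X)$ density operators; $\mathrm{Ch}(X',X)$ quantum channels. Maximally entangled state $\Phi_{RX}:=\frac1{|X|}\sum_{i,j}|ii\rangle\langle jj|$; Choi state of $\mathcal N\in\mathrm{Ch}(A'B',AB)$: $\Phi^{\mathcal N}_{R_AAR_BB}:=(\mathrm{id}\otimes\mathcal N)(\Phi_{R_AA'}\otimes\Phi_{R_BB'})$, $R_A\simeq A'$, $R_B\simeq B'$. $D_\infty(\rho\|\sigma):=\log\inf\{\lambda:\rho\le\lambda\sigma\}$; for a channel $\mathcal M$ and CP map $\mathcal M'$, $D_\infty[\mathcal M\|\mathcal M']:=\sup_{\rho\in\mathrm{St}(RX')}D_\infty((\mathrm{id}\otimes\mathcal M)(\rho)\|(\mathrm{id}\otimes\mathcal M')(\rho))$. NS conditional min-entropy: $S^{\not\to}_\infty[A|B]_{\mathcal N}:=-D_\infty[\mathcal N\|\mathcal R^{\mathbb1}_{A\to A}\circ\mathcal N]$, where $(\mathcal R^{\mathbb1}_{A\to A}\circ\mathcal N)(X)=\mathbb 1_A\otimes\operatorname{tr}_A\mathcal N(X)$. For a state $\rho_{XY}$, $S^\downarrow_\infty(X|Y)_\rho:=-D_\infty(\rho_{XY}\|\mathbb 1_X\otimes\rho_Y)$. *)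

From HB Require Import structures.
From mathcomp Require Import all_boot all_order all_algebra.
From mathcomp Require Import boolp classical_sets reals constructive_ereal ereal exp.
From mathcomp Require Import complex mxtens.

Set Implicit Arguments.
Unset Strict Implicit.
Unset Printing Implicit Defensive.

Import Order.TTheory GRing.Theory Num.Theory.
Local Open Scope ring_scope.

(* Finite-dimensional system of dimension n: operators are 'M[R[i]]_n.
   Composite systems use the Kronecker product *t of mxtens, i.e. the
   basis index of X Y is mxtens_index (x, y) = x * |Y| + y. *)

Section QInfo.
Variable R : realType.
Local Notation C := R[i].

Definition adjmx {m n} (A : 'M[C]_(m, n)) : 'M[C]_(n, m) := (map_mx Num.conj A)^T.

Definition psdmx {n} (A : 'M[C]_n) : Prop :=
  forall v : 'cV[C]_n, 0 <= (adjmx v *m A *m v) 0 0.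

Definition loewner {n} (A B : 'M[C]_n) : Prop := psdmx (B - A).

Definition density {n} (rho : 'M[C]_n) : Prop := psdmx rho /\ \tr rho = 1.

Definition ptrace1 {m n} (A : 'M[C]_(m * n)) : 'M[C]_n :=
  \matrix_(k, l) \sum_(i < m) A (mxtens_index (i, k)) (mxtens_index (i, l)).

Definition mxblock_of {r n} (X : 'M[C]_(r * n)) (i j : 'I_r) : 'M[C]_n :=
  \matrix_(k, l) X (mxtens_index (i, k)) (mxtens_index (j, l)).

Definition idtens (r : nat) {n m} (M : 'M[C]_n -> 'M[C]_m) (X : 'M[C]_(r * n))
  : 'M[C]_(r * m) :=
  \matrix_(p, q) M (mxblock_of X (mxtens_unindex p).1 (mxtens_unindex q).1)
                   (mxtens_unindex p).2 (mxtens_unindex q).2.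
Arguments idtens r {n m} M X.

Definition linear_map {n m} (M : 'M[C]_n -> 'M[C]_m) : Prop :=
  forall (a : C) (X Y : 'M[C]_n), M (a *: X + Y) = a *: M X + M Y.

Definition is_CP {n m} (M : 'M[C]_n -> 'M[C]_m) : Prop :=
  linear_map M /\ forall (r : nat) (X : 'M[C]_(r * n)), psdmx X -> psdmx (idtens r M X).

Definition is_channel {n m} (M : 'M[C]_n -> 'M[C]_m) : Prop :=
  is_CP M /\ forall X : 'M[C]_n, \tr (M X) = \tr X.

(* base-2 logarithm extended to \bar R (log 0 = -oo, log +oo = +oo) *)
Definition elog2 (x : \bar R) : \bar R :=
  match x with
  | +oo%E => +oo%E
  | -oo%E => -oo%E
  | (r%:E)%E => if 0 < r then ((ln r / ln 2)%:E)%E else -oo%E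
  end.

Definition Dmax {n} (rho sigma : 'M[C]_n) : \bar R :=
  elog2 (ereal_inf [set (l%:E)%E | l in [set l : R | loewner rho ((l%:C)%C *: sigma)]]).

Definition Dmax_ch {n m} (M M' : 'M[C]_n -> 'M[C]_m) : \bar R :=
  ereal_sup [set x | exists (r : nat) (rho : 'M[C]_(r * n)),
     density rho /\ x = Dmax (idtens r M rho) (idtens r M' rho)].

(* replacement map R^1_{A->A} o N : X |-> 1_A (x) tr_A N(X), output on A B *)
Definition repl_A {nin a b} (N : 'M[C]_nin -> 'M[C]_(a * b)) (X : 'M[C]_nin)
  : 'M[C]_(a * b) := (1%:M : 'M[C]_a) *t ptrace1 (N X).

Definition S_NS {a' b' a b} (N : 'M[C]_(a' * b') -> 'M[C]_(a * b)) : \bar R :=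
  (- Dmax_ch N (repl_A N))%E.

Definition S_down {x y} (rho : 'M[C]_(x * y)) : \bar R :=
  (- Dmax rho ((1%:M : 'M[C]_x) *t ptrace1 rho))%E.

Definition maxent n : 'M[C]_(n * n) :=
  (n%:R)^-1 *: \sum_(i < n) \sum_(j < n)
     delta_mx (mxtens_index (i, i)) (mxtens_index (j, j)).

Definition relabel {m n} (f : 'I_m -> 'I_n) (X : 'M[C]_n) : 'M[C]_m :=
  \matrix_(i, j) X (f i) (f j).

(* index map for (P Q)(S T) -> (P S)(Q T) reordering *)
Definition swap_mid_idx {p q s t} (k : 'I_((p * s) * (q * t))) : 'I_((p * q) * (s * t)) :=
  let u := (mxtens_unindex k).1 in let v := (mxtens_unindex k).2 in
  mxtens_index (mxtens_index ((mxtens_unindex u).1, (mxtens_unindex v).1),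
                mxtens_index ((mxtens_unindex u).2, (mxtens_unindex v).2)).

Definition swap_mid {p q s t} (X : 'M[C]_((p * q) * (s * t))) : 'M[C]_((p * s) * (q * t)) :=
  relabel (@swap_mid_idx p q s t) X.

(* Choi state Phi^N on R_A A R_B B (ordering (R_A A)(R_B B)):
   Phi_{R_A A'} (x) Phi_{R_B B'} is regrouped as (R_A R_B)(A' B'),
   id_{R_A R_B} (x) N is applied, and the result is regrouped as (R_A A)(R_B B). *)
Definition choi {a' b' a b} (N : 'M[C]_(a' * b') -> 'M[C]_(a * b))
  : 'M[C]_((a' * a) * (b' * b)) :=
  swap_mid (idtens (a' * b') N (swap_mid (maxent a' *t maxent b'))).

(* index map A (R_A (R_B B))  ->  (R_A A)(R_B B) *)
Definition A_first_idx {a' b' a b} (k : 'I_(a * (a' * (b' * b)))) : 'I_((a' * a) * (b' * b)) :=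
  let ia := (mxtens_unindex k).1 in
  let w := (mxtens_unindex k).2 in
  let ra := (mxtens_unindex w).1 in
  let w2 := (mxtens_unindex w).2 in
  mxtens_index (mxtens_index (ra, ia), w2).

(* state on R_A A R_B B viewed as bipartite state on A | (R_A R_B B) *)
Definition A_vs_rest {a' b' a b} (X : 'M[C]_((a' * a) * (b' * b)))
  : 'M[C]_(a * (a' * (b' * b))) :=
  relabel (@A_first_idx a' b' a b) X.

End QInfo.

From HB Require Import structures.
From mathcomp Require Import all_boot all_order all_algebra.
From mathcomp Require Import boolp classical_sets reals constructive_ereal ereal exp.
From mathcomp Require Import complex mxtens spectral ring.

(* The Choi state of N, with A split off from R_A R_B B, is a relabelling of
   (id (x) N) applied to the maximally entangled state Phi on (R_A R_B)(A' B'),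
   and 1_A (x) tr_A of it is the same relabelling of (id (x) R o N)(Phi); the
   relabelling does not change D_oo.  So the claim is that the channel
   divergence D_oo[N || R o N] is attained at Phi.  Phi is an admissible input,
   and conversely, if l (R o N)(Phi) - N(Phi) is positive then the Choi matrix
   of the map l (R o N) - N is positive, hence that map is completely positive
   and l is feasible for every input. *)

Set Implicit Arguments.
Unset Strict Implicit.
Unset Printing Implicit Defensive.

Import Order.TTheory GRing.Theory Num.Theory.
Local Open Scope ring_scope.

Section PositiveSemidefinite.
Variable R : realType.
Local Notation C := R[i].

Lemma adjmxE m n (A : 'M[C]_(m, n)) i j : adjmx A i j = (A j i)^*.
Proof. by rewrite !mxE. Qed.

Lemma adjmx_trmxC m n (A : 'M[C]_(m, n)) : adjmx A = map_mx Num.conj A^T.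
Proof. by rewrite /adjmx map_trmx. Qed.

Lemma adjmxD m n (A B : 'M[C]_(m, n)) : adjmx (A + B) = adjmx A + adjmx B.
Proof. by apply/matrixP=> i j; rewrite !mxE rmorphD. Qed.

Lemma adjmxZ m n c (A : 'M[C]_(m, n)) : adjmx (c *: A) = c^* *: adjmx A.
Proof. by apply/matrixP=> i j; rewrite !mxE rmorphM. Qed.

Lemma adjmxM m n p (A : 'M[C]_(m, n)) (B : 'M[C]_(n, p)) :
  adjmx (A *m B) = adjmx B *m adjmx A.
Proof. by rewrite /adjmx map_mxM trmx_mul. Qed.

Lemma adjmxK m n (A : 'M[C]_(m, n)) : adjmx (adjmx A) = A.
Proof. by apply/matrixP=> i j; rewrite !mxE conjCK. Qed.

Lemma adjmx_delta n (i : 'I_n) : adjmx (delta_mx i 0 : 'cV[C]_n) = delta_mx 0 i.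
Proof.
apply/matrixP=> k l; rewrite !mxE.
by case: (l == i); case: (k == 0); rewrite ?rmorph1 ?rmorph0.
Qed.

Lemma adjmx_diag n (d : 'rV[C]_n) : adjmx (diag_mx d) = diag_mx (map_mx Num.conj d).
Proof.
apply/matrixP=> k l; rewrite !mxE; have [->|/negbTE kl] := eqVneq k l.
  by rewrite ?eqxx ?mulr1n.
by rewrite !mulr0n rmorph0.
Qed.

Lemma diag_mxM n (d e : 'rV[C]_n) :
  diag_mx d *m diag_mx e = diag_mx (\row_k (d 0 k * e 0 k)).
Proof.
apply/matrixP=> k l; rewrite !mxE (bigD1 k) //= big1 ?addr0.
  by rewrite !mxE eqxx mulr1n; have [->|_] := eqVneq k l; rewrite ?mulr1n ?mulr0n ?mulr0.
by move=> j /negbTE jk; rewrite !mxE eq_sym jk mulr0n mul0r.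
Qed.

Lemma form_delta n (A : 'M[C]_n) i j :
  (delta_mx 0 i : 'rV[C]_n) *m A *m (delta_mx j 0 : 'cV[C]_n) = (A i j)%:M.
Proof. by apply/matrixP=> x y; rewrite !ord1 -rowE -colE !mxE eqxx mulr1n. Qed.

Lemma form_delta2 n (A : 'M[C]_n) i j c :
  let v := (delta_mx i 0 + c *: delta_mx j 0 : 'cV[C]_n) in
  (adjmx v *m A *m v) 0 0 = A i i + c^* * c * A j j + c * A i j + c^* * A j i.
Proof.
rewrite /= adjmxD adjmxZ !adjmx_delta.
rewrite !(mulmxDl, mulmxDr) -!scalemxAl -!scalemxAr !form_delta !mxE eqxx !mulr1n.
by ring.
Qed.

Lemma psdmx_hermitian n (A : 'M[C]_n) : psdmx A -> forall i j, A i j = (A j i)^*.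
Proof.
move=> psdA i j.
(* Polarisation: the form is real at [e_i + e_j] and at [e_i + 'i e_j]. *)
have q_real k l c : let v := (delta_mx k 0 + c *: delta_mx l 0 : 'cV[C]_n) in
    ((adjmx v *m A *m v) 0 0)^* = (adjmx v *m A *m v) 0 0.
  by move=> v; apply/CrealP/ger0_real/psdA.
have real_diag k : (A k k)^* = A k k.
  by move: (q_real k k 0); rewrite /= form_delta2 rmorph0 !(mul0r, mulr0, addr0).
have := q_real i j 1; have := q_real i j 'i; rewrite /= !form_delta2.
rewrite !rmorphD !rmorphM /= !conjCK conjCi rmorph1 !real_diag !mul1r.
set x := A i j; set y := A j i; set p := A i i; set q := A j j; set I := 'i.
move=> hI h1.
have sqrI : 1 + I * I = 0 by rewrite -expr2 sqrCi subrr.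
have : (y^* - x) * 2 = ((p + q + x^* + y^*) - (p + q + x + y))
  - I * ((p + I * - I * q + - I * x^* + I * y^*) - (p + - I * I * q + I * x + - I * y))
  - (1 + I * I) * (x^* - y^* + x - y) by ring.
rewrite h1 hI sqrI !subrr mulr0 mul0r !subr0 => /eqP.
by rewrite mulf_eq0 pnatr_eq0 orbF subr_eq0 => /eqP.
Qed.

Lemma psdmx_gram_decomp n (A : 'M[C]_n) : psdmx A -> exists B : 'M[C]_n, A = B *m adjmx B.
Proof.
move=> psdA.
have /hermitian_normalmx/orthomx_spectralP eA : A \is hermsymmx.
  apply/is_hermitianmxP; rewrite expr0 scale1r; apply/matrixP=> i j.
  by rewrite !mxE; exact: psdmx_hermitian.
set P := spectralmx A in eA; set d := spectral_diag A in eA.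
have uP : P \is unitarymx := spectral_unitarymx A.
have PP : P *m adjmx P = 1%:M by rewrite adjmx_trmxC; apply/unitarymxP.
rewrite invmx_unitary // -adjmx_trmxC in eA.
have d_ge0 k : 0 <= d 0 k.
  have := psdA (adjmx P *m delta_mx k 0).
  rewrite eA adjmxM adjmxK adjmx_delta !mulmxA -(mulmxA _ P) PP mulmx1.
  by rewrite -(mulmxA _ P) PP mulmx1 form_delta !mxE !eqxx !mulr1n.
exists (adjmx P *m diag_mx (\row_k sqrtC (d 0 k))).
rewrite adjmxM adjmxK adjmx_diag !mulmxA -(mulmxA (adjmx P)) diag_mxM {1}eA.
congr (_ *m diag_mx _ *m _); apply/rowP=> k; rewrite !mxE.
by rewrite conj_Creal ?sqrtC_real // -expr2 sqrtCK.
Qed.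

Lemma psdmx_congr n m (A : 'M[C]_n) (K : 'M[C]_(n, m)) :
  psdmx A -> psdmx (adjmx K *m A *m K).
Proof. by move=> psdA v; have := psdA (K *m v); rewrite adjmxM !mulmxA. Qed.

Lemma psdmx1 n : psdmx (1%:M : 'M[C]_n).
Proof.
move=> v; rewrite mulmx1 mxE; apply: sumr_ge0 => k _.
by rewrite adjmxE mulrC mul_conjC_ge0.
Qed.

Lemma psdmx_gram n m (B : 'M[C]_(n, m)) : psdmx (B *m adjmx B).
Proof.
have := psdmx_congr (adjmx B) (@psdmx1 m).
by rewrite adjmxK mulmx1.
Qed.

Lemma psdmx_sum n (I : finType) (F : I -> 'M[C]_n) :
  (forall i, psdmx (F i)) -> psdmx (\sum_i F i).
Proof.
move=> psdF v; rewrite mulmx_sumr mulmx_suml summxE.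
by apply: sumr_ge0 => i _; apply: psdF.
Qed.

Lemma psdmxZ n (c : C) (A : 'M[C]_n) : 0 <= c -> psdmx A -> psdmx (c *: A).
Proof. by move=> c_ge0 psdA v; rewrite -scalemxAr -scalemxAl mxE mulr_ge0. Qed.

End PositiveSemidefinite.

Section LinearMaps.
Variable R : realType.
Local Notation C := R[i].

Lemma sum_mxtens_index (T : nmodType) m n (F : 'I_(m * n) -> T) :
  \sum_(k < m * n) F k = \sum_(i < m) \sum_(j < n) F (mxtens_index (i, j)).
Proof.
rewrite pair_big (reindex (@mxtens_index m n)) /=; first by apply: eq_bigr => -[].
by exists (@mxtens_unindex m n) => k _; rewrite ?mxtens_indexK ?mxtens_unindexK.
Qed.

Section Linear.
Variables (n m : nat) (L : 'M[C]_n -> 'M[C]_m).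
Hypothesis linL : linear_map L.

Lemma linear_map0 : L 0 = 0.
Proof.
have := linL 1 0 0; rewrite !scale1r addr0 => L0.
by apply: (addrI (L 0)); rewrite -L0 addr0.
Qed.

Lemma linear_mapD X Y : L (X + Y) = L X + L Y.
Proof. by have := linL 1 X Y; rewrite !scale1r. Qed.

Lemma linear_mapZ c X : L (c *: X) = c *: L X.
Proof. by rewrite -[c *: X]addr0 linL linear_map0 addr0. Qed.

Lemma linear_map_sum (I : finType) (F : I -> 'M[C]_n) :
  L (\sum_i F i) = \sum_i L (F i).
Proof. exact: (big_morph L linear_mapD linear_map0). Qed.

End Linear.

Lemma linear_map_comb n m (M N : 'M[C]_n -> 'M[C]_m) (c : C) :
  linear_map M -> linear_map N -> linear_map (fun X => c *: M X - N X).
Proof. by move=> linM linN d X Y; rewrite linM linN; apply/matrixP=> i j; rewrite !mxE; ring. Qed.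

Lemma idtensE r n m (L : 'M[C]_n -> 'M[C]_m) (X : 'M[C]_(r * n)) s k t l :
  idtens L X (mxtens_index (s, k)) (mxtens_index (t, l)) = L (mxblock_of X s t) k l.
Proof. by rewrite mxE !mxtens_indexK. Qed.

Lemma idtens_comb r n m (M N : 'M[C]_n -> 'M[C]_m) (c : C) (X : 'M[C]_(r * n)) :
  c *: idtens M X - idtens N X = idtens (fun Y => c *: M Y - N Y) X.
Proof. by apply/matrixP=> i j; rewrite !mxE. Qed.

Lemma linear_map_idtens r n m (L : 'M[C]_n -> 'M[C]_m) :
  linear_map L -> linear_map (idtens (r:=r) L).
Proof.
move=> linL c X Y; apply/matrixP=> P Q; rewrite !mxE.
set s := (mxtens_unindex P).1; set t := (mxtens_unindex Q).1.
have -> : mxblock_of (c *: X + Y) s t = c *: mxblock_of X s t + mxblock_of Y s t.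
  by apply/matrixP=> x y; rewrite !mxE.
by rewrite linL !mxE.
Qed.

(* The unnormalised Choi matrix [sum_(i,j) |i><j| (x) L(|i><j|)]. *)
Definition choimx n m (L : 'M[C]_n -> 'M[C]_m) : 'M[C]_(n * m) :=
  \matrix_(P, Q) L (delta_mx (mxtens_unindex P).1 (mxtens_unindex Q).1)
     (mxtens_unindex P).2 (mxtens_unindex Q).2.

Lemma tens1_congrE n r m (A : 'M[C]_(n * m)) (W : 'M[C]_(n, r)) s k t l :
  (adjmx (W *t (1%:M : 'M[C]_m)) *m A *m (W *t 1%:M))
     (mxtens_index (s, k)) (mxtens_index (t, l)) =
  \sum_q \sum_p (W p s)^* * A (mxtens_index (p, k)) (mxtens_index (q, l)) * W q t.
Proof.
have id_col (F : 'I_m -> C) : \sum_j F j * (1%:M : 'M[C]_m) j l = F l.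
  rewrite (bigD1 l) //= big1 ?addr0; first by rewrite mxE eqxx mulr1.
  by move=> j /negbTE jl; rewrite mxE jl mulr0.
rewrite mxE sum_mxtens_index; apply: eq_bigr => q _.
under eq_bigr => j _ do rewrite tensmxE mulrA.
rewrite id_col mxE sum_mxtens_index mulr_suml; apply: eq_bigr => p _.
under eq_bigr => j _ do rewrite adjmxE tensmxE rmorphM.
rewrite mulr_suml (bigD1 k) //= big1 ?addr0; first by rewrite mxE eqxx rmorph1 mulr1.
by move=> j /negbTE jk; rewrite mxE jk rmorph0 mulr0 !mul0r.
Qed.

Lemma idtens_gram_col r n m (L : 'M[C]_n -> 'M[C]_m) (b : 'cV[C]_(r * n)) :
  linear_map L ->
  let W := (\matrix_(q, t) (b (mxtens_index (t, q)) 0)^* : 'M[C]_(n, r)) *t 1%:M in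
  idtens L (b *m adjmx b) = adjmx W *m choimx L *m W.
Proof.
move=> linL W; apply/matrixP=> S T.
case: (mxtens_indexP S) => s k; case: (mxtens_indexP T) => t l.
rewrite idtensE tens1_congrE.
have -> : mxblock_of (b *m adjmx b) s t = \sum_p \sum_q
    (b (mxtens_index (s, p)) 0 * (b (mxtens_index (t, q)) 0)^*) *: delta_mx p q.
  rewrite [LHS]matrix_sum_delta; apply: eq_bigr => p _; apply: eq_bigr => q _.
  by rewrite !mxE big_ord1 !mxE.
rewrite linear_map_sum // summxE exchange_big /=; apply: eq_bigr => q _.
rewrite linear_map_sum // summxE; apply: eq_bigr => p _.
by rewrite linear_mapZ // !mxE !mxtens_indexK /= conjCK mulrAC.
Qed.

Lemma psd_choimx_cp r n m (L : 'M[C]_n -> 'M[C]_m) :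
  linear_map L -> psdmx (choimx L) ->
  forall X : 'M[C]_(r * n), psdmx X -> psdmx (idtens L X).
Proof.
move=> linL psdJ X /psdmx_gram_decomp[B ->].
have -> : B *m adjmx B = \sum_j col j B *m adjmx (col j B).
  apply/matrixP=> i k; rewrite summxE mxE; apply: eq_bigr => j _.
  by rewrite !mxE big_ord1 !mxE.
rewrite linear_map_sum; last exact: linear_map_idtens.
by apply: psdmx_sum => j; rewrite idtens_gram_col //; apply: psdmx_congr.
Qed.

End LinearMaps.

Section MaximallyEntangled.
Variable R : realType.
Local Notation C := R[i].

Lemma eq_mxtens_index m n (i i' : 'I_m) (j j' : 'I_n) :
  (mxtens_index (i, j) == mxtens_index (i', j')) = (i == i') && (j == j').
Proof. by rewrite (inj_eq (can_inj (@mxtens_indexK m n))) xpair_eqE. Qed.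

Lemma natr_andb (b1 b2 : bool) : ((b1 && b2)%:R : C) = b1%:R * b2%:R.
Proof. by rewrite -mulnb natrM. Qed.

Lemma sum_eq2 n (i j : 'I_n) : \sum_(k < n) (((i == k) && (j == k))%:R : C) = (i == j)%:R.
Proof.
rewrite (bigD1 i) //= big1 ?addr0; first by rewrite eqxx eq_sym.
by move=> k /negbTE ik; rewrite eq_sym ik.
Qed.

Lemma maxentE n (i j k l : 'I_n) :
  maxent R n (mxtens_index (i, j)) (mxtens_index (k, l)) =
  n%:R^-1 * ((i == j) && (k == l))%:R.
Proof.
rewrite mxE summxE; congr (_ * _).
under eq_bigr => x _ do [rewrite summxE; under eq_bigr => y _ do
  rewrite mxE !eq_mxtens_index natr_andb].
under eq_bigr => x _ do rewrite -mulr_sumr sum_eq2.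
by rewrite -mulr_suml sum_eq2 natr_andb.
Qed.

Lemma swap_mid_maxent a b :
  swap_mid (maxent R a *t maxent R b) = maxent R (a * b).
Proof.
apply/matrixP=> S T.
case: (mxtens_indexP S) => p x; case: (mxtens_indexP T) => q y.
case: (mxtens_indexP p) => p1 p2; case: (mxtens_indexP x) => x1 x2.
case: (mxtens_indexP q) => q1 q2; case: (mxtens_indexP y) => y1 y2.
rewrite mxE /swap_mid_idx !mxtens_indexK /= tensmxE !maxentE !eq_mxtens_index.
rewrite !natr_andb natrM invfM; ring.
Qed.

Lemma mxblock_of_maxent n (p q : 'I_n) :
  mxblock_of (maxent R n) p q = n%:R^-1 *: delta_mx p q.
Proof. by apply/matrixP=> x y; rewrite mxE maxentE !mxE (eq_sym x) (eq_sym y). Qed.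

Lemma idtens_maxent n m (L : 'M[C]_n -> 'M[C]_m) : linear_map L ->
  idtens L (maxent R n) = n%:R^-1 *: choimx L.
Proof.
move=> linL; apply/matrixP=> S T.
case: (mxtens_indexP S) => s k; case: (mxtens_indexP T) => t l.
by rewrite idtensE mxblock_of_maxent linear_mapZ // !mxE !mxtens_indexK.
Qed.

Lemma maxent_density n : (0 < n)%N -> density (maxent R n).
Proof.
move=> n_gt0; split.
  pose u : 'cV[C]_(n * n) := \col_K ((mxtens_unindex K).1 == (mxtens_unindex K).2)%:R.
  have -> : maxent R n = n%:R^-1 *: (u *m adjmx u).
    apply/matrixP=> S T.
    case: (mxtens_indexP S) => i j; case: (mxtens_indexP T) => k l.
    by rewrite maxentE !mxE big_ord1 !mxE !mxtens_indexK /= rmorph_nat natr_andb.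
  by apply: psdmxZ; [rewrite invr_ge0 ler0n | exact: psdmx_gram].
rewrite /mxtrace sum_mxtens_index.
under eq_bigr => i _ do [under eq_bigr => j _ do rewrite maxentE;
  rewrite -mulr_sumr sum_eq2 eqxx mulr1].
by rewrite sumr_const card_ord -[_ *+ n]mulr_natl mulfV // pnatr_eq0 -lt0n.
Qed.

End MaximallyEntangled.

Section Relabelling.
Variable R : realType.
Local Notation C := R[i].

Lemma psdmx_relabel m n (f : 'I_m -> 'I_n) (X : 'M[C]_n) :
  psdmx X -> psdmx (relabel f X).
Proof.
pose F : 'M[C]_(n, m) := \matrix_(k, i) (f i == k)%:R.
have -> : relabel f X = adjmx F *m X *m F.
  apply/matrixP=> i j; rewrite mxE [RHS]mxE (bigD1 (f j)) //= big1 ?addr0; last first.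
    by move=> k /negbTE kf; rewrite [F k j]mxE eq_sym kf mulr0.
  rewrite [F _ j]mxE eqxx mulr1 mxE (bigD1 (f i)) //= big1 ?addr0; last first.
    by move=> k /negbTE kf; rewrite adjmxE mxE eq_sym kf rmorph0 mul0r.
  by rewrite adjmxE mxE eqxx rmorph1 mul1r.
exact: psdmx_congr.
Qed.

Lemma psdmx_relabelE m n (f : 'I_m -> 'I_n) (g : 'I_n -> 'I_m) (X : 'M[C]_n) :
  cancel g f -> psdmx (relabel f X) <-> psdmx X.
Proof.
move=> gK; have fgX : relabel g (relabel f X) = X.
  by apply/matrixP=> i j; rewrite !mxE !gK.
by split=> [/(psdmx_relabel g)|]; [rewrite fgX | exact: psdmx_relabel].
Qed.

Lemma relabel_comb m n (f : 'I_m -> 'I_n) c (X Y : 'M[C]_n) :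
  relabel f (c *: X - Y) = c *: relabel f X - relabel f Y.
Proof. by apply/matrixP=> i j; rewrite !mxE. Qed.

End Relabelling.

Section MaxDivergence.
Variable R : realType.
Local Notation C := R[i].

Lemma le_elog2 (x y : \bar R) : (x <= y)%E -> (elog2 x <= elog2 y)%E.
Proof.
case: x => [x| |]; case: y => [y| |] //=; rewrite ?leey ?leNye //.
rewrite lee_fin => le_xy; case: ifP => x_gt0; last by rewrite leNye.
have y_gt0 : 0 < y by apply: lt_le_trans le_xy.
rewrite y_gt0 lee_fin ler_pM2r; last by rewrite invr_gt0 ln_gt0 // ltr1n.
by rewrite ler_ln // posrE.
Qed.

Lemma le_Dmax n n' (X Y : 'M[C]_n) (X' Y' : 'M[C]_n') :
  (forall l : R, loewner X' ((l%:C)%C *: Y') -> loewner X ((l%:C)%C *: Y)) ->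
  (Dmax X Y <= Dmax X' Y')%E.
Proof.
move=> XY; apply: le_elog2; apply: le_ereal_inf_tmp => _ [l l_ok <-].
by apply: ge_ereal_inf; exists l%:E => //; exists l => //; apply: XY.
Qed.

Lemma Dmax_relabel m n (f : 'I_m -> 'I_n) (g : 'I_n -> 'I_m) (X Y : 'M[C]_n) :
  cancel g f -> Dmax (relabel f X) (relabel f Y) = Dmax X Y.
Proof.
move=> gK; have loewnerE l : loewner (relabel f X) ((l%:C)%C *: relabel f Y) <->
    loewner X ((l%:C)%C *: Y).
  by rewrite /loewner -relabel_comb; apply: psdmx_relabelE gK.
by apply: le_anti; rewrite !le_Dmax // => l /loewnerE.
Qed.

Lemma loewner_idtensE r n m (M N : 'M[C]_n -> 'M[C]_m) (X : 'M[C]_(r * n)) c :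
  loewner (idtens M X) (c *: idtens N X) = psdmx (idtens (fun Y => c *: N Y - M Y) X).
Proof. by rewrite /loewner idtens_comb. Qed.

Lemma Dmax_ch_choi n m (N M : 'M[C]_n -> 'M[C]_m) :
  (0 < n)%N -> linear_map N -> linear_map M ->
  Dmax_ch N M = Dmax (idtens N (maxent R n)) (idtens M (maxent R n)).
Proof.
move=> n_gt0 linN linM; apply: le_anti; apply/andP; split; last first.
  apply: ereal_sup_ubound; exists n, (maxent R n); split=> //.
  exact: maxent_density.
apply: ge_ereal_sup => _ [r [rho [[psd_rho _] ->]]]; apply: le_Dmax => l.
have linC := linear_map_comb (l%:C)%C linM linN.
rewrite !loewner_idtensE idtens_maxent // => /(psdmxZ (ler0n _ n)).
rewrite scalerA mulfV ?scale1r ?pnatr_eq0 -?lt0n // => psd_choi.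
exact: psd_choimx_cp.
Qed.

End MaxDivergence.

Section ChoiState.
Variable R : realType.
Local Notation C := R[i].
Variables a' b' a b : nat.

Lemma linear_map_repl (N : 'M[C]_(a' * b') -> 'M[C]_(a * b)) :
  linear_map N -> linear_map (repl_A N).
Proof.
move=> linN c X Y; rewrite /repl_A linN; apply/matrixP=> S T.
case: (mxtens_indexP S) => i k; case: (mxtens_indexP T) => j l.
rewrite [LHS]tensmxE [RHS]mxE [X in _ = X + _]mxE !tensmxE mulrCA -mulrDr.
congr (_ * _); rewrite !mxE mulr_sumr -big_split.
by apply: eq_bigr => x _; rewrite !mxE.
Qed.

(* Reordering of A (R_A (R_B B)) as (R_A R_B)(A B), the ordering of [idtens N]. *)
Definition choi_idx (k : 'I_(a * (a' * (b' * b)))) : 'I_((a' * b') * (a * b)) :=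
  swap_mid_idx (A_first_idx k).

Definition choi_idx_inv (K : 'I_((a' * b') * (a * b))) : 'I_(a * (a' * (b' * b))) :=
  let: (r, o) := mxtens_unindex K in
  mxtens_index ((mxtens_unindex o).1,
    mxtens_index ((mxtens_unindex r).1,
      mxtens_index ((mxtens_unindex r).2, (mxtens_unindex o).2))).

Lemma choi_idxE (i : 'I_a) (ra : 'I_a') (rb : 'I_b') (ib : 'I_b) :
  choi_idx (mxtens_index (i, mxtens_index (ra, mxtens_index (rb, ib)))) =
  mxtens_index (mxtens_index (ra, rb), mxtens_index (i, ib)).
Proof. by rewrite /choi_idx /A_first_idx /swap_mid_idx !mxtens_indexK. Qed.

Lemma choi_idx_invK : cancel choi_idx_inv choi_idx.
Proof.
move=> K; case: (mxtens_indexP K) => r o.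
case: (mxtens_indexP r) => ra rb; case: (mxtens_indexP o) => i ib.
by rewrite /choi_idx_inv !mxtens_indexK choi_idxE.
Qed.

Lemma A_vs_rest_choi (N : 'M[C]_(a' * b') -> 'M[C]_(a * b)) :
  A_vs_rest (choi N) = relabel choi_idx (idtens N (maxent R (a' * b'))).
Proof. by rewrite /A_vs_rest /choi swap_mid_maxent; apply/matrixP=> i j; rewrite !mxE. Qed.

Lemma ptrace1_relabel_choi (N : 'M[C]_(a' * b') -> 'M[C]_(a * b))
    (X : 'M[C]_((a' * b') * (a' * b'))) :
  1%:M *t ptrace1 (relabel choi_idx (idtens N X)) = relabel choi_idx (idtens (repl_A N) X).
Proof.
apply/matrixP=> S T.
case: (mxtens_indexP S) => i w; case: (mxtens_indexP w) => ra w2.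
case: (mxtens_indexP w2) => rb ib.
case: (mxtens_indexP T) => j w'; case: (mxtens_indexP w') => ra' w2'.
case: (mxtens_indexP w2') => rb' ib'.
rewrite tensmxE [RHS]mxE !choi_idxE idtensE /repl_A tensmxE !mxE; congr (_ * _).
by apply: eq_bigr => k _; rewrite mxE !choi_idxE idtensE.
Qed.

End ChoiState.

Theorem proposition11 (R : realType) (a' b' a b : nat)
  (ha' : (0 < a')%N) (hb' : (0 < b')%N) (ha : (0 < a)%N) (hb : (0 < b)%N)
  (N : 'M[R[i]]_(a' * b') -> 'M[R[i]]_(a * b)) :
  is_channel N ->
  S_NS N = S_down (A_vs_rest (choi N)).
Proof.
move=> [[linN _] _].
rewrite /S_NS /S_down A_vs_rest_choi ptrace1_relabel_choi.
rewrite (Dmax_relabel _ _ (@choi_idx_invK a' b' a b)).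
by rewrite -Dmax_ch_choi ?muln_gt0 ?ha' ?hb' //; exact: linear_map_repl.
Qed.
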